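(* Let $\lambda\in\mathbb R$ with $\alpha=1-\lambda>0$, and let $\mathcal Q_\lambda$ be a $\lambda$-exponential family satisfying Assumptions A and B. Let $x_1,\dots,x_N\in\mathcal X$ satisfy $x_i\in S_\vartheta$ for all $i$ and all $\vartheta\in\operatorname{dom}\varphi_\lambda$. Let $J\ge1$, weights $\xi_{k,1},\dots,\xi_{k,J}\ge0$ summing to $1$ and parameters $\vartheta_{k,1},\dots,\vartheta_{k,J}\in\operatorname{dom}\varphi_\lambda$, and for $j\in\{1,\dots,J\}$ define $\gamma_{k,j}(x)=\frac{\xi_{k,j}q_{\vartheta_{k,j}}(x)}{\sum_{j'=1}^J\xi_{k,j'}q_{\vartheta_{k,j'}}(x)}$. Fix $j$, assume $\sum_{i'}\gamma_{k,j}(x_{i'})>0$, set $w_i=\gamma_{k,j}(x_i)/\sum_{i'=1}^N\gamma_{k,j}(x_{i'})$ and $\bar T=\sum_{i=1}^Nw_iT(x_i)$, and suppose there exists $\vartheta_{k+1,j}\in\operatorname{dom}\varphi_\lambda$ with $q^{(\alpha)}_{\vartheta_{k+1,j}}(T)=\bar T$. Let $F(\vartheta)=\sum_{i=1}^N\gamma_{k,j}(x_i)\log q_\vartheta(x_i)$. (i) If $\lambda=0$, $\vartheta_{k+1,j}$ maximizes $F$ over $\operatorname{dom}\varphi_\lambda$. (ii) If $\lambda<0$ (resp. $\lambda>0$), $\vartheta_{k+1,j}$ maximizes over $\operatorname{dom}\varphi_\lambda$ the function $\vartheta\mapsto\big(\sum_{i'}\gamma_{k,j}(x_{i'})\big)\big(c_\lambda(\vartheta,\bar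 T)-\varphi_\lambda(\vartheta)\big)$, which is a lower bound (resp. upper bound) of $F$ on $\operatorname{dom}\varphi_\lambda$.
   Context: $\mathcal H$ is a finite-dimensional real Hilbert space; $\mathcal X$ a measurable space with measure $m$; $p(f)=\int fp\,dm$. Conventions $\log s=-\infty$ for $s\le0$, $\exp(-\infty)=0$. Coupling $c_\lambda(u,v)=\frac1\lambda\log(1+\lambda\langle u,v\rangle)$ ($\lambda\ne0$), $c_0=\langle\cdot,\cdot\rangle$. For measurable $T:\mathcal X\to\mathcal H$: $\varphi_\lambda(\vartheta)=\log\int\exp(c_\lambda(\vartheta,T))dm$, $\operatorname{dom}\varphi_\lambda=\{\varphi_\lambda<+\infty\}$, $q_\vartheta=\exp(c_\lambda(\vartheta,T)-\varphi_\lambda(\vartheta))$, $\mathcal Q_\lambda=\{q_\vartheta:\vartheta\in\operatorname{dom}\varphi_\lambda\}$, support $S_\vartheta=\{x:1+\lambda\langle\vartheta,T(x)\rangle>0\}$. Escort $p^{(\alpha)}=p^\alpha/\int p^\alpha dm$; $p_{|Y}=p\mathbf 1_Y$. Compatibility: $p$ is $q_\vartheta$-compatible if $\int p_{|S_\vartheta}^\alpha dm\in(0,\infty)$ and $\int Tp_{|S_\vartheta}^\alpha dm$ has finite components; $\mathcal Q_\lambda$-compatible if for every $\vartheta\in\operatorname{dom}\varphi_\lambda$. Assumption A: $\alpha>0$ and $\varphi_\lambda$ proper (never $-\infty$, nonempty domain). Assumption B: there is a nonempty $S_\lambda$ with $S_\vartheta=S_\lambda$ for all $\vartheta\in\operatorname{dom}\varphi_\lambda$,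 and each $q_\vartheta\in\mathcal Q_\lambda$ is $\mathcal Q_\lambda$-compatible. *)

From HB Require Import structures.
From mathcomp Require Import all_boot all_order all_algebra.
From mathcomp Require Import all_classical all_reals all_analysis.
Set Implicit Arguments. Unset Strict Implicit. Unset Printing Implicit Defensive.
Import Order.TTheory GRing.Theory Num.Theory.
Local Open Scope classical_set_scope.
Local Open Scope ring_scope.

Section LambdaExp.
Variable R : realType.
Variable n : nat.

(* H = R^n with its standard inner product (any finite-dim. real Hilbert
   space is isometric to such an R^n). *)
Definition dotH (u v : 'rV[R]_n) : R := \sum_(i < n) u 0 i * v 0 i.

Definition elog (s : \bar R) : \bar R :=
  match s with
  | EFin r => if 0 < r then (ln r)%:E else -oo%E
  | EPInf => +oo%E
  | ENInf => -oo%E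
  end.

Definition eexp (s : \bar R) : \bar R :=
  match s with
  | EFin r => (expR r)%:E
  | EPInf => +oo%E
  | ENInf => 0%E
  end.

Definition coupling (lam : R) (u v : 'rV[R]_n) : \bar R :=
  if lam == 0 then (dotH u v)%:E
  else if 0 < 1 + lam * dotH u v then (ln (1 + lam * dotH u v) / lam)%:E
  else -oo%E.

Variables (d : measure_display) (X : measurableType d).
Variable (m : {measure set X -> \bar R}).
Variable T : X -> 'rV[R]_n.

Definition phi (lam : R) (th : 'rV[R]_n) : \bar R :=
  elog (\int[m]_x eexp (coupling lam th (T x)))%E.

Definition domphi (lam : R) : set 'rV[R]_n := [set th | (phi lam th < +oo)%E].

(* q_theta (real valued; meaningful for theta in dom phi) *)
Definition qfam (lam : R) (th : 'rV[R]_n) (x : X) : R :=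
  fine (eexp (coupling lam th (T x) - phi lam th)%E).

Definition suppS (lam : R) (th : 'rV[R]_n) : set X :=
  [set x | 0 < 1 + lam * dotH th (T x)].

Definition restr (p : X -> R) (Y : set X) : X -> R :=
  fun x => p x * \1_Y x.

Definition compatible (alpha lam : R) (p : X -> R) (th : 'rV[R]_n) : Prop :=
  (0 < \int[m]_x ((restr p (suppS lam th) x) `^ alpha)%:E)%E /\
  (\int[m]_x ((restr p (suppS lam th) x) `^ alpha)%:E < +oo)%E /\
  (forall i : 'I_n, m.-integrable setT
     (fun x => (T x 0 i * (restr p (suppS lam th) x) `^ alpha)%:E)).

Definition Qcompatible (alpha lam : R) (p : X -> R) : Prop :=
  forall th, domphi lam th -> compatible alpha lam p th.

Definition assumptionA (alpha lam : R) : Prop :=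
  0 < alpha /\ (forall th, phi lam th != -oo%E) /\ (exists th, domphi lam th).

Definition assumptionB (alpha lam : R) : Prop :=
  (exists2 S : set X, S !=set0 & forall th, domphi lam th -> suppS lam th = S) /\
  (forall th, domphi lam th -> Qcompatible alpha lam (qfam lam th)).

Definition escort_mean (alpha lam : R) (th : 'rV[R]_n) : 'rV[R]_n :=
  \row_i (Rintegral m setT (fun x => T x 0 i * (qfam lam th x) `^ alpha) /
          Rintegral m setT (fun x => (qfam lam th x) `^ alpha)).

Definition gam (lam : R) (J : nat) (xi : 'I_J -> R) (ths : 'I_J -> 'rV[R]_n)
  (j : 'I_J) (x : X) : R :=
  xi j * qfam lam (ths j) x / \sum_(j' < J) xi j' * qfam lam (ths j') x.

End LambdaExp.

From HB Require Import structures.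
From mathcomp Require Import all_boot all_order all_algebra.
From mathcomp Require Import all_classical all_reals all_analysis.
From mathcomp Require Import ring lra.
Import Order.TTheory GRing.Theory Num.Theory.
Local Open Scope classical_set_scope.
Local Open Scope ring_scope.

Set Implicit Arguments. Unset Strict Implicit. Unset Printing Implicit Defensive.

(* Write q_th = expc lam <th, T> / Z_th, so that phi th = ln Z_th.  For lam < 1
   the map expc lam is convex, so expc lam <th, T> dominates a rescaled copy of
   expc lam <th', T> plus a term that is linear in T with weight q_th'^(1-lam);
   when Tbar is the escort mean of q_th' that term integrates to zero, giving
   Z_th >= exp (c(th, Tbar) - c(th', Tbar)) Z_th', i.e. th' maximizes
   c(., Tbar) - phi.  The log-likelihood F th differs from (sum gamma) times
   this surrogate only through sum gamma_i ln (1 + lam <th, T x_i>) / lam, which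
   Jensen's inequality for ln compares with the same expression at Tbar; the
   sign of lam decides the direction, and for lam = 0 the two coincide. *)

Section deformed_exponential.
Variable R : realType.

Definition rcoupling (lam t : R) : R :=
  if lam == 0 then t else ln (1 + lam * t) / lam.

(* exp (c_lam (u, v)) = expc lam <u, v>: e^t for lam = 0, (1 + lam t)_+^(1/lam)
   otherwise. *)
Definition expc (lam t : R) : R :=
  if 0 < 1 + lam * t then expR (rcoupling lam t) else 0.

Lemma expc_ge0 (lam t : R) : 0 <= expc lam t.
Proof. by rewrite /expc; case: ifP; rewrite ?expR_ge0. Qed.

Lemma expcE (lam t : R) : 0 < 1 + lam * t -> expc lam t = expR (rcoupling lam t).
Proof. by rewrite /expc => ->. Qed.

Lemma expc_out (lam t : R) : ~~ (0 < 1 + lam * t) -> expc lam t = 0.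
Proof. by rewrite /expc => /negbTE ->. Qed.

Lemma expR_mul_ln_le (t u : R) : 0 <= t <= 1 -> 0 < u ->
  expR (t * ln u) <= t * u + (1 - t).
Proof.
move=> t01 u0.
have t01' : Itv.spec (@Itv.num_sem R) (Itv.Real `[0%Z, 1%Z]) t.
  by rewrite /Itv.spec /Itv.num_sem /= in_itv /= t01 num_real.
have := @concave_ln R (Itv.mk t01') (u : R^o) (1 : R^o) u0 ltr01.
rewrite !convRE /= ln1 mulr0 addr0 mulr1 => le_ln.
have tu0 : 0 < t * u + (1 - t).
  case/andP: t01 => t0 t1; have [->|t_neq0] := eqVneq t 0.
    by rewrite mul0r add0r subr0.
  by rewrite ltr_pwDl ?subr_ge0 // mulr_gt0 // lt0r t_neq0.
by rewrite -[leRHS]lnK ?posrE // ler_expR.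
Qed.

Lemma le_expR_ln_div (lam t : R) : lam != 0 -> lam < 1 -> 0 < t ->
  1 + (t - 1) / lam <= expR (ln t / lam).
Proof.
move=> lam_neq0 lam_lt1 t_gt0; have [lam_lt0|lam_ge0] := ltrP lam 0.
  apply: le_trans (expR_ge1Dx _); rewrite lerD2l; apply: ler_wnM2r.
    by rewrite invr_le0 ltW.
  by have := @le_ln1Dx R (t - 1); rewrite addrCA subrr addr0; apply; lra.
have lam01 : 0 <= lam <= 1 by rewrite lam_ge0 ltW.
have := expR_mul_ln_le lam01 (expR_gt0 (ln t / lam)).
rewrite expRK (mulrC lam) divfK // lnK // => t_le.
suff : (t - 1) / lam <= expR (ln t / lam) - 1 by lra.
by rewrite ler_pdivrMr //; lra.
Qed.

(* Tangent line of the convex map expc lam at u0, whose slope is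
   expc lam u0 `^ (1 - lam); the rescaling by (1 + lam ub0) / (1 + lam ub) makes
   the linear term vanish at (u, u0) = (ub, ub0). *)
Lemma expc_tangent (lam u u0 ub ub0 : R) : lam < 1 ->
  0 < 1 + lam * u -> 0 < 1 + lam * u0 -> 0 < 1 + lam * ub -> 0 < 1 + lam * ub0 ->
  expR (rcoupling lam ub - rcoupling lam ub0) *
    (expc lam u0 + expc lam u0 `^ (1 - lam) *
      ((1 + lam * ub0) / (1 + lam * ub) * (u - ub) - (u0 - ub0)))
  <= expc lam u.
Proof.
move=> lam_lt1 hu hu0 hub hub0; rewrite !expcE //.
have [lam0|lam_neq0] := eqVneq lam 0.
  rewrite lam0 /rcoupling eqxx subr0 powRr1 ?expR_ge0 // !mul0r !addr0 divr1 mul1r.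
  rewrite -{1}[expR u0]mulr1 -mulrDr mulrA -expRD.
  apply: le_trans (ler_wpM2l (expR_ge0 _) (expR_ge1Dx _)) _.
  by rewrite -expRD ler_expR; lra.
rewrite -invf_div.
set s := (1 + lam * ub) / (1 + lam * ub0).
rewrite /rcoupling (negbTE lam_neq0).
set a := 1 + lam * u0 in hu0 *; set b := 1 + lam * u in hu *.
set A := 1 + lam * ub0 in hub0 s *; set B := 1 + lam * ub in hub s *.
have s_gt0 : 0 < s by rewrite divr_gt0.
have powE : expR (ln a / lam) `^ (1 - lam) = expR (ln a / lam) / a.
  rewrite /powR gt_eqF ?expR_gt0 // expRK mulrBl mul1r mulrCA divff // mulr1.
  by rewrite expRB lnK.
have linE : s^-1 * (u - ub) - (u0 - ub0) = (b / s - a) / lam.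
  by rewrite /s /a /b /A /B; field; rewrite lam_neq0 !gt_eqF.
have lnbE : ln b = ln s + ln a + ln (b / (s * a)).
  rewrite ln_div ?posrE ?(mulr_gt0 s_gt0) // lnM ?posrE //; ring.
have lnsE : ln s = ln B - ln A by rewrite ln_div.
rewrite powE linE (_ : expR _ * _ = expR (ln s / lam) * expR (ln a / lam) *
  (1 + (b / (s * a) - 1) / lam)); last first.
  by rewrite -mulrBl -lnsE; field; rewrite lam_neq0 !gt_eqF.
have ba_gt0 : 0 < b / (s * a) by rewrite divr_gt0 // mulr_gt0.
apply: le_trans (ler_wpM2l _ (le_expR_ln_div lam_neq0 lam_lt1 ba_gt0)) _.
  by rewrite mulr_ge0 ?expR_ge0.
by rewrite -!expRD lnbE !mulrDl.
Qed.

End deformed_exponential.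

Section weighted_sums.
Variables (R : realType) (N : nat) (g : 'I_N -> R).
Hypothesis g_ge0 : forall i, 0 <= g i.
Hypothesis sum_g_gt0 : 0 < \sum_(i < N) g i.

Lemma wsum_gt0 (b : 'I_N -> R) : (forall i, 0 < b i) -> 0 < \sum_(i < N) g i * b i.
Proof.
move=> b_gt0; have [i /andP[_ gi_gt0]] : exists i, true && (0 < g i).
  by apply: psumr_neq0P => //; apply/eqP; rewrite gt_eqF.
rewrite (bigD1 i) //=; apply: lt_le_trans (mulr_gt0 gi_gt0 (b_gt0 i)) _.
rewrite lerDl; apply: sumr_ge0 => j _.
exact: mulr_ge0 (g_ge0 j) (ltW (b_gt0 j)).
Qed.

Lemma jensen_ln (b : 'I_N -> R) : (forall i, 0 < b i) ->
  \sum_(i < N) g i * ln (b i) <=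
  (\sum_(i < N) g i) * ln ((\sum_(i < N) g i * b i) / \sum_(i < N) g i).
Proof.
move=> b_gt0; set B := (\sum_(i < N) g i * b i) / \sum_(i < N) g i.
have B_gt0 : 0 < B by rewrite divr_gt0 ?wsum_gt0.
have ln_le i : ln (b i) <= ln B + (b i / B - 1).
  have := @le_ln1Dx R (b i / B - 1); rewrite addrCA subrr addr0 ln_div ?posrE //.
  have : 0 < b i / B by rewrite divr_gt0.
  lra.
apply: le_trans (_ : \sum_(i < N) g i * (ln B + (b i / B - 1)) <= _).
  by apply: ler_sum => i _; apply: ler_wpM2l.
have -> : \sum_(i < N) g i * (ln B + (b i / B - 1)) =
    (\sum_(i < N) g i) * ln B + ((\sum_(i < N) g i * b i) / B - \sum_(i < N) g i).
  rewrite !mulr_suml -sumrB -big_split; apply: eq_bigr => i _ /=; ring.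
by rewrite /B invf_div mulrCA divff ?mulr1 ?subrr ?addr0 // gt_eqF ?wsum_gt0.
Qed.

End weighted_sums.

Section inner_product.
Variables (R : realType) (n : nat).
Implicit Types (u v w : 'rV[R]_n).

Lemma dotHBl u w v : dotH (u - w) v = dotH u v - dotH w v.
Proof. by rewrite /dotH -sumrB; apply: eq_bigr => i _; rewrite !mxE mulrBl. Qed.

Lemma dotHZl (a : R) u v : dotH (a *: u) v = a * dotH u v.
Proof. by rewrite /dotH mulr_sumr; apply: eq_bigr => i _; rewrite mxE mulrA. Qed.

Lemma dotHBr u v w : dotH u (v - w) = dotH u v - dotH u w.
Proof. by rewrite /dotH -sumrB; apply: eq_bigr => i _; rewrite !mxE mulrBr. Qed.

Lemma dotH_sumr (N : nat) u (a : 'I_N -> R) (w : 'I_N -> 'rV[R]_n) :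
  dotH u (\sum_(k < N) a k *: w k) = \sum_(k < N) a k * dotH u (w k).
Proof.
rewrite /dotH; under eq_bigr do rewrite summxE mulr_sumr.
rewrite exchange_big; apply: eq_bigr => k _; rewrite mulr_sumr.
by apply: eq_bigr => i _; rewrite mxE mulrCA.
Qed.

End inner_product.

Section barycenter.
Variables (R : realType) (n N : nat) (g : 'I_N -> R) (v : 'I_N -> 'rV[R]_n).
Hypothesis g_ge0 : forall k, 0 <= g k.
Hypothesis sum_g_gt0 : 0 < \sum_(k < N) g k.
Let S := \sum_(k < N) g k.
Let vbar := \sum_(k < N) (g k / S) *: v k.

Lemma sum_dotH_barycenter th : \sum_(k < N) g k * dotH th (v k) = S * dotH th vbar.
Proof.
rewrite dotH_sumr mulr_sumr; apply: eq_bigr => k _.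
by rewrite mulrA mulrCA divff ?mulr1 // gt_eqF.
Qed.

Lemma one_add_dotH_barycenter lam th :
  1 + lam * dotH th vbar = (\sum_(k < N) g k * (1 + lam * dotH th (v k))) / S.
Proof.
have S_neq0 : S != 0 by rewrite gt_eqF.
apply: (mulIf S_neq0); rewrite divfK // mulrDl mul1r -mulrA (mulrC _ S).
rewrite -sum_dotH_barycenter.
by rewrite mulr_sumr -big_split; apply: eq_bigr => k _ /=; ring.
Qed.

Lemma barycenter_supp lam th : (forall k, 0 < 1 + lam * dotH th (v k)) ->
  0 < 1 + lam * dotH th vbar.
Proof. by move=> supp; rewrite one_add_dotH_barycenter divr_gt0 ?wsum_gt0. Qed.

Lemma jensen_rcoupling lam th : (forall k, 0 < 1 + lam * dotH th (v k)) ->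
  lam * \sum_(k < N) g k * rcoupling lam (dotH th (v k)) <=
  lam * (S * rcoupling lam (dotH th vbar)).
Proof.
move=> supp; have [->|lam_neq0] := eqVneq lam 0; first by rewrite !mul0r.
rewrite /rcoupling (negbTE lam_neq0) mulr_sumr mulrCA.
under eq_bigr do rewrite mulrCA (mulrCA lam) divff // mulr1.
by rewrite (mulrCA lam) divff // mulr1 one_add_dotH_barycenter jensen_ln.
Qed.

End barycenter.

Section real_integrals.
Variables (R : realType) (d : measure_display) (X : measurableType d).
Variable m : {measure set X -> \bar R}.
Implicit Types f h : X -> R.

Local Notation integrable f := (m.-integrable setT (EFin \o f)).

Lemma integrableD_EFin f h : integrable f -> integrable h ->
  integrable (fun x => f x + h x).
Proof.
move=> intf inth.
apply: (eq_integrable measurableT _ _ _ (integrableD measurableT intf inth)).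
by move=> x _ /=; rewrite EFinD.
Qed.

Lemma integrableB_EFin f h : integrable f -> integrable h ->
  integrable (fun x => f x - h x).
Proof.
move=> intf inth.
apply: (eq_integrable measurableT _ _ _ (integrableB measurableT intf inth)).
by move=> x _ /=; rewrite EFinB.
Qed.

Lemma integrableZl_EFin (k : R) f : integrable f -> integrable (fun x => k * f x).
Proof.
move=> intf.
apply: (eq_integrable measurableT _ _ _ (integrableZl measurableT k intf)).
by move=> x _ /=; rewrite EFinM.
Qed.

Lemma integrable_sum_EFin (I : Type) (s : seq I) (F : I -> X -> R) :
  (forall i, integrable (F i)) -> integrable (fun x => \sum_(i <- s) F i x).
Proof.
move=> intF; elim: s => [|i s ih].
  by under eq_fun do rewrite big_nil; exact: integrable0.
by under eq_fun do rewrite big_cons; exact: integrableD_EFin.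
Qed.

Lemma Rintegral_sum (I : Type) (s : seq I) (F : I -> X -> R) :
  (forall i, integrable (F i)) ->
  \int[m]_x (\sum_(i <- s) F i x) = \sum_(i <- s) \int[m]_x F i x.
Proof.
move=> intF; elim: s => [|i s ih].
  by under eq_Rintegral do rewrite big_nil; rewrite big_nil /Rintegral integral0.
under eq_Rintegral do rewrite big_cons.
by rewrite RintegralD ?big_cons ?ih //; exact: integrable_sum_EFin.
Qed.

Lemma integrable_ge0_EFin f (r : R) : measurable_fun setT f ->
  (forall x, 0 <= f x) -> (\int[m]_x (f x)%:E = r%:E)%E -> integrable f.
Proof.
move=> mf f_ge0 intfE; apply/integrableP; split.
  exact/measurable_realfun.measurable_EFinP.
by under eq_integral do rewrite /= ger0_norm //; rewrite intfE ltry.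
Qed.

End real_integrals.

Section tangent_integration.
Variables (R : realType) (n : nat) (d : measure_display) (X : measurableType d).
Variables (m : {measure set X -> \bar R}) (T : X -> 'rV[R]_n).

Local Notation integrable f := (m.-integrable setT (EFin \o f)).

Lemma le_Rintegral_tangent (f f' p : X -> R) (Tbar c : 'rV[R]_n) (K : R) :
  integrable f -> integrable f' -> integrable p ->
  (forall i, integrable (fun x => T x 0 i * p x)) ->
  (forall i, Tbar 0 i * \int[m]_x p x = \int[m]_x (T x 0 i * p x)) ->
  (forall x, K * f' x + p x * dotH c (T x - Tbar) <= f x) ->
  K * \int[m]_x f' x <= \int[m]_x f x.
Proof.
move=> intf intf' intp intTp Tbar_mean tangent.
pose ell i x := c 0 i * (T x 0 i * p x - Tbar 0 i * p x).
have ellE x : p x * dotH c (T x - Tbar) = \sum_i ell i x.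
  by rewrite /dotH mulr_sumr; apply: eq_bigr => i _; rewrite /ell !mxE; ring.
have int_ell i : integrable (ell i).
  by apply/integrableZl_EFin/integrableB_EFin => //; exact: integrableZl_EFin.
have int_ell0 : \int[m]_x (\sum_i ell i x) = 0.
  rewrite Rintegral_sum // big1 // => i _.
  have intTbarp := integrableZl_EFin (Tbar 0 i) intp.
  rewrite RintegralZl //; last exact: integrableB_EFin.
  by rewrite RintegralB // RintegralZl // Tbar_mean subrr mulr0.
have int_sum_ell := integrable_sum_EFin (index_enum 'I_n) int_ell.
have int_Kf' := integrableZl_EFin K intf'.
rewrite -[X in X <= _]addr0 -int_ell0 -RintegralZl // -RintegralD //.
apply: le_Rintegral => //; first exact: integrableD_EFin.
by move=> x _; rewrite -ellE.
Qed.

End tangent_integration.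

Section lambda_family.
Variables (R : realType) (n : nat) (d : measure_display) (X : measurableType d).
Variables (m : {measure set X -> \bar R}) (T : X -> 'rV[R]_n).
Hypothesis measurable_T : forall i : 'I_n, measurable_fun setT (fun x => T x 0 i).
Variable lam : R.
Implicit Types (th : 'rV[R]_n) (x : X).

Local Notation dens th := (fun x => expc lam (dotH th (T x))).
Local Notation escort alpha th := (fun x => qfam m T lam th x `^ alpha).

Lemma couplingE (u v : 'rV[R]_n) : coupling lam u v =
  if 0 < 1 + lam * dotH u v then (rcoupling lam (dotH u v))%:E else -oo%E.
Proof.
rewrite /coupling /rcoupling; case: eqP => [->|//].
by rewrite mul0r addr0 ltr01.
Qed.

Lemma eexp_coupling (u v : 'rV[R]_n) :
  eexp (coupling lam u v) = (expc lam (dotH u v))%:E.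
Proof. by rewrite couplingE /expc; case: ifP. Qed.

Lemma measurable_expc : measurable_fun setT (expc lam).
Proof.
have measurable_affine : measurable_fun setT (fun t : R => 1 + lam * t).
  apply: measurable_realfun.measurable_funD; first exact: measurable_cst.
  by apply: measurable_realfun.measurable_funM => //; exact: measurable_cst.
rewrite /expc; apply: measurable_fun_ifT; last exact: measurable_cst.
  by apply: measurable_realfun.measurable_fun_ltr => //; exact: measurable_cst.
apply: measurableT_comp (@measurable_realfun.measurable_expR R) _.
rewrite /rcoupling; case: eqP => _ //.
apply: measurable_realfun.measurable_funM; last exact: measurable_cst.
exact: measurableT_comp (@measurable_realfun.measurable_ln R) measurable_affine.
Qed.

Lemma measurable_dens th : measurable_fun setT (dens th).
Proof.
apply: measurableT_comp measurable_expc _; rewrite /dotH.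
apply: measurable_sum => i.
by apply: measurable_realfun.measurable_funM => //; exact: measurable_cst.
Qed.

Lemma phi_finite th : phi m T lam th != -oo%E -> domphi m T lam th ->
  exists2 r, 0 < r & [/\ m.-integrable setT (EFin \o dens th),
    \int[m]_x dens th x = r & phi m T lam th = (ln r)%:E].
Proof.
rewrite /domphi /phi /=; under eq_integral do rewrite eexp_coupling.
case intE: (\int[m]_x (dens th x)%:E)%E => [r| |] //=.
case: ifPn => // r_gt0 _ _; exists r => //; split => //.
- exact: integrable_ge0_EFin (measurable_dens th) (fun x => expc_ge0 _ _) intE.
- by rewrite /Rintegral intE.
Qed.

Lemma qfamE th r x : 0 < r -> phi m T lam th = (ln r)%:E ->
  qfam m T lam th x = expc lam (dotH th (T x)) / r.
Proof.
move=> r_gt0 phiE; rewrite /qfam phiE couplingE /expc.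
by case: ifP => _ /=; rewrite ?mul0r // expRB lnK.
Qed.

Lemma qfam_ge0 th x : 0 <= qfam m T lam th x.
Proof. by rewrite /qfam; case: (_ - _)%E => [r| |] //=; exact: expR_ge0. Qed.

Lemma gam_ge0 J (xi : 'I_J -> R) (ths : 'I_J -> 'rV[R]_n) j x :
  (forall j', 0 <= xi j') -> 0 <= gam m T lam xi ths j x.
Proof.
move=> xi_ge0; rewrite /gam divr_ge0 ?mulr_ge0 ?qfam_ge0 //.
by apply: sumr_ge0 => j' _; rewrite mulr_ge0 ?qfam_ge0.
Qed.

Lemma restr_qfam th : restr (qfam m T lam th) (suppS T lam th) = qfam m T lam th.
Proof.
apply/funext => x; rewrite /restr indicE.
have [//|x_out] := boolP (x \in suppS T lam th); first by rewrite mulr1.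
move: x_out; rewrite mulr0 notin_setE /qfam couplingE => /negP/negbTE ->.
by case: (phi m T lam th).
Qed.

Lemma ln_qfam th r x : 0 < r -> phi m T lam th = (ln r)%:E -> suppS T lam th x ->
  ln (qfam m T lam th x) = rcoupling lam (dotH th (T x)) - ln r.
Proof.
move=> r_gt0 phiE x_in.
by rewrite (qfamE _ r_gt0 phiE) expcE // ln_div ?posrE ?expR_gt0 // expRK.
Qed.

Lemma compatible_escort alpha thn rn :
  0 < rn -> phi m T lam thn = (ln rn)%:E ->
  compatible m T alpha lam (qfam m T lam thn) thn ->
  [/\ m.-integrable setT (EFin \o escort alpha thn),
     forall i,
       m.-integrable setT (EFin \o (fun x => T x 0 i * escort alpha thn x)),
     0 < \int[m]_x escort alpha thn x &
     forall i, escort_mean m T alpha lam thn 0 i * \int[m]_x escort alpha thn x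
               = \int[m]_x (T x 0 i * escort alpha thn x)].
Proof.
move=> rn_gt0 phiE; rewrite /compatible restr_qfam => -[p_gt0 [p_fin intTp]].
set p := escort alpha thn.
have p_ge0 x : 0 <= p x by exact: powR_ge0.
have int_p : m.-integrable setT (EFin \o p).
  apply/integrableP; split.
    apply/measurable_realfun.measurable_EFinP.
    apply: measurableT_comp (@measurable_realfun.measurable_powR R _) _.
    rewrite (funext (fun x => qfamE x rn_gt0 phiE)).
    apply: measurable_realfun.measurable_funM; last exact: measurable_cst.
    exact: measurable_dens.
  by under eq_integral do rewrite /= ger0_norm //.
have Z_gt0 : 0 < \int[m]_x p x.
  by move: p_gt0 p_fin; rewrite /Rintegral; case: (\int[m]_x _)%E.
by split => // i; rewrite /escort_mean mxE divfK ?gt_eqF.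
Qed.

Lemma coupling_sub_phi_le_escort th thn : lam < 1 ->
  phi m T lam th != -oo%E -> phi m T lam thn != -oo%E ->
  domphi m T lam th -> domphi m T lam thn -> suppS T lam th = suppS T lam thn ->
  compatible m T (1 - lam) lam (qfam m T lam thn) thn ->
  let Tbar := escort_mean m T (1 - lam) lam thn in
  0 < 1 + lam * dotH th Tbar -> 0 < 1 + lam * dotH thn Tbar ->
  (coupling lam th Tbar - phi m T lam th <=
   coupling lam thn Tbar - phi m T lam thn)%E.
Proof.
move=> lam_lt1 phi_th phi_thn dom_th dom_thn supp_eq compat Tbar B_gt0 A_gt0.
have [r r_gt0 [int_f int_fE phiE]] := phi_finite phi_th dom_th.
have [rn rn_gt0 [int_fn int_fnE phinE]] := phi_finite phi_thn dom_thn.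
have [int_p int_Tp _ Tbar_mean] := compatible_escort rn_gt0 phinE compat.
rewrite !couplingE B_gt0 A_gt0 phiE phinE -!EFinB lee_fin.
set K := expR (rcoupling lam (dotH th Tbar) - rcoupling lam (dotH thn Tbar)).
suff : K * rn <= r.
  rewrite -ler_ln ?posrE ?mulr_gt0 ?expR_gt0 // lnM ?posrE ?expR_gt0 //.
  by rewrite expRK; lra.
rewrite -int_fE -int_fnE.
set A := 1 + lam * dotH thn Tbar; set B := 1 + lam * dotH th Tbar.
pose c := K *: (rn `^ (1 - lam) *: (A / B *: th - thn)).
apply: (le_Rintegral_tangent (c := c) int_f int_fn int_p int_Tp Tbar_mean) => x.
rewrite !dotHZl dotHBl dotHZl !dotHBr.
have [x_in|x_out] := boolP (0 < 1 + lam * dotH thn (T x)); last first.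
  have x_out' : ~~ (0 < 1 + lam * dotH th (T x)).
    by apply: contra x_out => x_in; have : suppS T lam thn x by rewrite -supp_eq.
  rewrite (qfamE _ rn_gt0 phinE) !expc_out // mul0r powR0 ?mulr0 ?mul0r ?addr0 //.
  by rewrite subr_eq0 eq_sym lt_eqF.
have x_in' : suppS T lam th x by rewrite supp_eq.
have escortE y : qfam m T lam thn x `^ (1 - lam) * (rn `^ (1 - lam) * y) =
    expc lam (dotH thn (T x)) `^ (1 - lam) * y.
  by rewrite mulrA -powRM ?(qfamE _ rn_gt0 phinE) ?divfK ?gt_eqF
    ?divr_ge0 ?expc_ge0 ?ltW.
rewrite mulrCA escortE -mulrDr.
exact: expc_tangent.
Qed.

End lambda_family.

Section M_step.
Variables (R : realType) (n : nat) (d : measure_display) (X : measurableType d).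
Variables (m : {measure set X -> \bar R}) (T : X -> 'rV[R]_n) (lam : R).
Hypothesis measurable_T : forall i : 'I_n, measurable_fun setT (fun x => T x 0 i).
Hypothesis phi_neqNy : forall th, phi m T lam th != -oo%E.
Variables (N : nat) (x : 'I_N -> X) (g : 'I_N -> R).
Hypothesis x_supp : forall i th, domphi m T lam th -> suppS T lam th (x i).
Hypothesis g_ge0 : forall i, 0 <= g i.
Hypothesis sum_g_gt0 : 0 < \sum_(i < N) g i.

Let S := \sum_(i < N) g i.
Let Tbar := \sum_(i < N) (g i / S) *: T (x i).
Let loglik th := \sum_(i < N) g i * ln (qfam m T lam th (x i)).
Let surrogate th := (S%:E * (coupling lam th Tbar - phi m T lam th))%E.

Lemma barycenter_T_supp th : domphi m T lam th -> 0 < 1 + lam * dotH th Tbar.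
Proof. by move=> dom_th; apply: barycenter_supp => // i; exact: x_supp. Qed.

Lemma loglik_surrogateE th : domphi m T lam th -> exists r,
  loglik th = \sum_(i < N) g i * rcoupling lam (dotH th (T (x i))) - S * ln r /\
  surrogate th = (S * rcoupling lam (dotH th Tbar) - S * ln r)%:E.
Proof.
move=> dom_th.
have [r r_gt0 [_ _ phiE]] := phi_finite measurable_T (phi_neqNy th) dom_th.
exists r; split.
  rewrite /loglik mulr_suml -sumrB; apply: eq_bigr => i _.
  by rewrite (ln_qfam r_gt0 phiE (x_supp i dom_th)) mulrBr.
by rewrite /surrogate couplingE barycenter_T_supp // phiE -EFinB -EFinM mulrBr.
Qed.

Lemma loglik_eq_surrogate : lam = 0 ->
  forall th, domphi m T lam th -> (loglik th)%:E = surrogate th.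
Proof.
move=> lam0 th dom_th; have [r [-> ->]] := loglik_surrogateE dom_th.
by rewrite lam0 /rcoupling eqxx sum_dotH_barycenter.
Qed.

Lemma surrogate_le_loglik : lam < 0 ->
  forall th, domphi m T lam th -> (surrogate th <= (loglik th)%:E)%E.
Proof.
move=> lam_lt0 th dom_th; have [r [-> ->]] := loglik_surrogateE dom_th.
rewrite lee_fin lerD2r -(ler_nM2l lam_lt0); apply: jensen_rcoupling => // i.
exact: x_supp.
Qed.

Lemma loglik_le_surrogate : 0 < lam ->
  forall th, domphi m T lam th -> ((loglik th)%:E <= surrogate th)%E.
Proof.
move=> lam_gt0 th dom_th; have [r [-> ->]] := loglik_surrogateE dom_th.
rewrite lee_fin lerD2r -(ler_pM2l lam_gt0); apply: jensen_rcoupling => // i.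
exact: x_supp.
Qed.

Lemma surrogate_le_escort th thn : lam < 1 ->
  domphi m T lam th -> domphi m T lam thn -> suppS T lam th = suppS T lam thn ->
  compatible m T (1 - lam) lam (qfam m T lam thn) thn ->
  escort_mean m T (1 - lam) lam thn = Tbar -> (surrogate th <= surrogate thn)%E.
Proof.
move=> lam_lt1 dom_th dom_thn supp_eq compat escortE.
apply: lee_wpmul2l; first by rewrite lee_fin ltW.
rewrite -escortE; apply: coupling_sub_phi_le_escort => //;
  by rewrite escortE; exact: barycenter_T_supp.
Qed.

End M_step.

Theorem proposition13 (R : realType) (n : nat) (d : measure_display)
  (X : measurableType d) (m : {measure set X -> \bar R}) (T : X -> 'rV[R]_n)
  (lam : R) (N J : nat) (x : 'I_N -> X) (xi : 'I_J -> R)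
  (ths : 'I_J -> 'rV[R]_n) (j : 'I_J) (thnew : 'rV[R]_n) :
  (forall i : 'I_n, measurable_fun setT (fun y => T y 0 i)) ->
  0 < 1 - lam ->
  assumptionA m T (1 - lam) lam ->
  assumptionB m T (1 - lam) lam ->
  (forall i th, domphi m T lam th -> suppS T lam th (x i)) ->
  (0 < J)%N ->
  (forall j', 0 <= xi j') -> \sum_(j' < J) xi j' = 1 ->
  (forall j', domphi m T lam (ths j')) ->
  let g := fun i => gam m T lam xi ths j (x i) in
  0 < \sum_(i < N) g i ->
  let Tbar := \sum_(i < N) (g i / \sum_(i' < N) g i') *: T (x i) in
  domphi m T lam thnew ->
  escort_mean m T (1 - lam) lam thnew = Tbar ->
  let F := fun th => \sum_(i < N) g i * ln (qfam m T lam th (x i)) in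
  let G := fun th => ((\sum_(i < N) g i)%:E *
                      (coupling lam th Tbar - phi m T lam th))%E in
  (lam = 0 -> forall th, domphi m T lam th -> F th <= F thnew) /\
  (lam < 0 -> (forall th, domphi m T lam th -> (G th <= G thnew)%E) /\
              (forall th, domphi m T lam th -> (G th <= (F th)%:E)%E)) /\
  (0 < lam -> (forall th, domphi m T lam th -> (G th <= G thnew)%E) /\
              (forall th, domphi m T lam th -> ((F th)%:E <= G th)%E)).
Proof.
move=> mT alpha_gt0 [_ [phi_neqNy _]] [[S _ suppE] compat] x_supp _ xi_ge0 _ _
  g sum_g_gt0 Tbar dom_new escortE F G.
have g_ge0 i : 0 <= g i by exact: gam_ge0.
have G_max th : domphi m T lam th -> (G th <= G thnew)%E.
  move=> dom_th; apply: surrogate_le_escort => //; first lra.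
  - by rewrite (suppE _ dom_th) (suppE _ dom_new).
  - exact: compat.
split; [|split].
- move=> lam0 th dom_th; rewrite -lee_fin.
  rewrite !(loglik_eq_surrogate mT phi_neqNy x_supp g_ge0 sum_g_gt0 lam0) //.
  exact: G_max.
- move=> lam_lt0; split=> th dom_th; first exact: G_max.
  exact: surrogate_le_loglik.
- move=> lam_gt0; split=> th dom_th; first exact: G_max.
  exact: loglik_le_surrogate.
Qed.
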